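(* The function $\gamma(p)=\dfrac{p^2}{\log(e-\log p)}$ is increasing and convex on the interval $(0,1)$. *)

From Stdlib Require Import Reals.
Open Scope R_scope.

Definition gamma_fn (p : R) : R := p ^ 2 / ln (exp 1 - ln p).

Definition strictly_increasing_on (f : R -> R) (a b : R) : Prop :=
  forall x y, a < x < b -> a < y < b -> x < y -> f x < f y.

Definition convex_on (f : R -> R) (a b : R) : Prop :=
  forall x y t, a < x < b -> a < y < b -> 0 <= t <= 1 ->
    f (t * x + (1 - t) * y) <= t * f x + (1 - t) * f y.

(** On (0,1) we have [e - ln p > e], hence [ln (e - ln p) > 1], and the
    derivative [p * (2 / ln (e - ln p) + 1 / ((e - ln p) * ln (e - ln p)^2))]
    is positive.  Both [e - ln p] and [ln (e - ln p)] decrease in [p], so the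
    bracket, and hence the derivative, increases. *)

From Stdlib Require Import Reals Lra.
From Coquelicot Require Import Coquelicot.
Open Scope R_scope.

Section DerivativeCriteria.

Variables (f f' : R -> R) (a b : R).
Hypothesis f_derive : forall x, a < x < b -> derivable_pt_lim f x (f' x).

Lemma MVT_on x y : a < x < b -> a < y < b -> x < y ->
  exists c, f y - f x = f' c * (y - x) /\ x < c < y.
Proof.
intros hx hy hxy; apply MVT_cor2; [exact hxy |].
intros c hc; apply f_derive; lra.
Qed.

Lemma strictly_increasing_on_derive_pos :
  (forall x, a < x < b -> 0 < f' x) -> strictly_increasing_on f a b.
Proof.
intros f'_pos x y hx hy hxy.
destruct (MVT_on x y hx hy hxy) as [c [hc hxcy]].
assert (0 < f' c) by (apply f'_pos; lra).
nra.
Qed.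

Hypothesis f'_mono :
  forall x y, a < x < b -> a < y < b -> x <= y -> f' x <= f' y.

Lemma convex_on_derive_mono_lt x y t : a < x < b -> a < y < b -> x < y ->
  0 < t < 1 -> f (t * x + (1 - t) * y) <= t * f x + (1 - t) * f y.
Proof.
intros hx hy hxy ht.
set (z := t * x + (1 - t) * y).
assert (hz : x < z < y) by (unfold z; nra).
destruct (MVT_on x z hx ltac:(lra) ltac:(lra)) as [c1 [e1 hc1]].
destruct (MVT_on z y ltac:(lra) hy ltac:(lra)) as [c2 [e2 hc2]].
assert (slopes : f' c1 <= f' c2) by (apply f'_mono; lra).
assert (balance : t * (z - x) = (1 - t) * (y - z)) by (unfold z; ring).
assert (weight_nonneg : 0 <= t * (z - x)) by nra.
assert (t * (f z - f x) <= (1 - t) * (f y - f z)).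
{ rewrite e1, e2.
  replace (t * (f' c1 * (z - x))) with (f' c1 * (t * (z - x))) by ring.
  replace ((1 - t) * (f' c2 * (y - z))) with (f' c2 * (t * (z - x)))
    by (rewrite balance; ring).
  apply Rmult_le_compat_r; assumption. }
lra.
Qed.

Lemma convex_on_derive_mono : convex_on f a b.
Proof.
intros x y t hx hy ht.
destruct (Req_dec t 0) as [-> | t_neq0].
{ replace (0 * x + (1 - 0) * y) with y by ring; lra. }
destruct (Req_dec t 1) as [-> | t_neq1].
{ replace (1 * x + (1 - 1) * y) with x by ring; lra. }
destruct (Rtotal_order x y) as [hxy | [<- | hyx]].
- apply convex_on_derive_mono_lt; auto; lra.
- replace (t * x + (1 - t) * x) with x by ring; lra.
- replace (t * x + (1 - t) * y) with ((1 - t) * y + (1 - (1 - t)) * x) by ring.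
  replace (t * f x + (1 - t) * f y) with ((1 - t) * f y + (1 - (1 - t)) * f x)
    by ring.
  apply convex_on_derive_mono_lt; auto; lra.
Qed.

End DerivativeCriteria.

Definition e_minus_ln (p : R) : R := exp 1 - ln p.

Definition gamma_fn' (p : R) : R :=
  p * (2 / ln (e_minus_ln p) + / (e_minus_ln p * ln (e_minus_ln p) ^ 2)).

Lemma e_minus_ln_gt_e p : 0 < p < 1 -> exp 1 < e_minus_ln p.
Proof.
intros hp; unfold e_minus_ln.
assert (ln p < 0) by (rewrite <- ln_1; apply ln_increasing; lra).
lra.
Qed.

Lemma ln_e_minus_ln_gt_1 p : 0 < p < 1 -> 1 < ln (e_minus_ln p).
Proof.
intros hp; rewrite <- (ln_exp 1) at 1.
apply ln_increasing; [apply exp_pos | exact (e_minus_ln_gt_e p hp)].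
Qed.

Lemma e_minus_ln_pos p : 0 < p < 1 -> 0 < e_minus_ln p.
Proof. intros hp; pose proof (exp_pos 1); pose proof (e_minus_ln_gt_e p hp); lra. Qed.

Lemma e_minus_ln_antimono p q : 0 < p -> p <= q -> e_minus_ln q <= e_minus_ln p.
Proof. intros hp hpq; unfold e_minus_ln; pose proof (ln_le p q hp hpq); lra. Qed.

Lemma gamma_fn_derive p : 0 < p < 1 -> derivable_pt_lim gamma_fn p (gamma_fn' p).
Proof.
intros hp.
pose proof (e_minus_ln_pos p hp) as hu.
pose proof (ln_e_minus_ln_gt_1 p hp) as hL.
apply is_derive_Reals; unfold gamma_fn, gamma_fn', e_minus_ln.
auto_derive; change (exp 1 + - ln p) with (e_minus_ln p);
  fold (e_minus_ln p).
- repeat split; lra.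
- field; split; lra.
Qed.

Lemma gamma_fn'_pos p : 0 < p < 1 -> 0 < gamma_fn' p.
Proof.
intros hp; unfold gamma_fn'.
pose proof (e_minus_ln_pos p hp); pose proof (ln_e_minus_ln_gt_1 p hp).
apply Rmult_lt_0_compat; [lra |].
apply Rplus_lt_0_compat; [apply Rdiv_lt_0_compat; lra |].
apply Rinv_0_lt_compat, Rmult_lt_0_compat; [lra | apply pow_lt; lra].
Qed.

Lemma gamma_fn'_mono p q : 0 < p < 1 -> 0 < q < 1 -> p <= q ->
  gamma_fn' p <= gamma_fn' q.
Proof.
intros hp hq hpq; unfold gamma_fn'.
set (up := e_minus_ln p); set (uq := e_minus_ln q).
assert (huq : 0 < uq) by exact (e_minus_ln_pos q hq).
assert (hLq : 1 < ln uq) by exact (ln_e_minus_ln_gt_1 q hq).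
assert (hLp : 1 < ln up) by exact (ln_e_minus_ln_gt_1 p hp).
assert (hu : uq <= up) by exact (e_minus_ln_antimono p q (proj1 hp) hpq).
assert (hL : ln uq <= ln up) by exact (ln_le uq up huq hu).
assert (first_term : 2 / ln up <= 2 / ln uq).
{ apply Rmult_le_compat_l; [lra | apply Rinv_le_contravar; lra]. }
assert (second_term : / (up * ln up ^ 2) <= / (uq * ln uq ^ 2)).
{ apply Rinv_le_contravar.
  - apply Rmult_lt_0_compat; [lra | apply pow_lt; lra].
  - apply Rmult_le_compat; [lra | apply pow_le; lra | lra |].
    apply pow_incr; lra. }
assert (0 < 2 / ln up) by (apply Rdiv_lt_0_compat; lra).
assert (0 < / (up * ln up ^ 2))
  by (apply Rinv_0_lt_compat, Rmult_lt_0_compat; [lra | apply pow_lt; lra]).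
apply Rmult_le_compat; lra.
Qed.

Theorem lemma26 :
  strictly_increasing_on gamma_fn 0 1 /\ convex_on gamma_fn 0 1.
Proof.
split.
- apply (strictly_increasing_on_derive_pos gamma_fn gamma_fn').
  + exact gamma_fn_derive.
  + exact gamma_fn'_pos.
- apply (convex_on_derive_mono gamma_fn gamma_fn').
  + exact gamma_fn_derive.
  + exact gamma_fn'_mono.
Qed.
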